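(* Let $I\subseteq\mathbb{R}$ be an open interval, $f:I\to\mathbb{R}$ continuous, and let $X$ be a random variable on a probability space $(\Omega,\Sigma,\mu)$ such that (i) the range of $X$ is contained in $I$; (ii) the expectations $E(X)$ and $E(f(X))$ exist and are finite; (iii) $E(X)$ is a point of convexity of $f$ relative to $I$. Then $$f(E(X))\le\int_\Omega f(X(\omega))\,d\mu(\omega).$$
   Context: A point $p\in I$ is a point of convexity of $f$ relative to $I$ if $f(p)\le\sum_{k=1}^n\lambda_k f(x_k)$ for every finite family of points $x_1,\dots,x_n\in I$ and positive weights $\lambda_1,\dots,\lambda_n$ with $\sum_k\lambda_k=1$ and $\sum_k\lambda_k x_k=p$. *)

From HB Require Import structures.
From mathcomp Require Import all_boot all_order all_algebra.
From mathcomp Require Import all_classical all_reals all_analysis.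
Set Implicit Arguments. Unset Strict Implicit. Unset Printing Implicit Defensive.
Import Order.TTheory GRing.Theory Num.Theory numFieldNormedType.Exports.
Local Open Scope classical_set_scope.
Local Open Scope ring_scope.

Definition point_of_convexity (R : realType) (f : R -> R) (I : set R) (p : R) :=
  I p /\
  forall (n : nat) (x lam : 'I_n -> R),
    (forall k, I (x k)) -> (forall k, 0 < lam k) ->
    \sum_(k < n) lam k = 1 -> \sum_(k < n) lam k * x k = p ->
    f p <= \sum_(k < n) lam k * f (x k).

Definition open_interval (R : realType) (I : set R) := open I /\ is_interval I.

From HB Require Import structures.
From mathcomp Require Import all_boot all_order all_algebra.
From mathcomp Require Import ring lra.
From mathcomp Require Import all_classical all_reals all_analysis.
Set Implicit Arguments. Unset Strict Implicit. Unset Printing Implicit Defensive.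
Import Order.TTheory GRing.Theory Num.Theory numFieldNormedType.Exports.
Local Open Scope classical_set_scope.
Local Open Scope ring_scope.

(* Two-point convexity at an interior point p of I already yields a supporting
   line at p: every slope of a chord to the left of p is at most every slope of
   a chord to the right, so the supremum c of the left slopes gives
   f x >= f p + c (x - p) on all of I.  Taking expectations of this affine
   minorant of f evaluated at X gives f (E X) <= E (f X). *)

Section point_of_convexity.
Variables (R : realType) (I : set R) (f : R -> R) (p : R).
Hypothesis convp : point_of_convexity f I p.

Lemma point_of_convexity_chord a b : I a -> I b -> a < p -> p < b ->
  (b - a) * f p <= (b - p) * f a + (p - a) * f b.
Proof.
move=> Ia Ib ap pb; have ba : 0 < b - a by lra.
pose x (k : 'I_2) := if k == ord0 then a else b.
pose lam (k : 'I_2) := if k == ord0 then (b - p) / (b - a) else (p - a) / (b - a).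
have Ix k : I (x k) by rewrite /x; case: ifP.
have lam_gt0 k : 0 < lam k by rewrite /lam; case: ifP => _; apply: divr_gt0; lra.
have lam_sum : \sum_(k < 2) lam k = 1.
  by rewrite !big_ord_recl big_ord0 /lam /=; field; lra.
have lam_bary : \sum_(k < 2) lam k * x k = p.
  by rewrite !big_ord_recl big_ord0 /lam /x /=; field; lra.
have := convp.2 2 x lam Ix lam_gt0 lam_sum lam_bary.
rewrite !big_ord_recl big_ord0 /lam /x /= => /(ler_wpM2l (ltW ba)).
by congr (_ <= _); field; lra.
Qed.

Lemma point_of_convexity_slope_le a b : I a -> I b -> a < p -> p < b ->
  (f p - f a) / (p - a) <= (f b - f p) / (b - p).
Proof.
move=> Ia Ib ap pb; have := point_of_convexity_chord Ia Ib ap pb.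
rewrite ler_pdivrMr; last lra.
rewrite mulrAC ler_pdivlMr; last lra.
nra.
Qed.

Lemma point_of_convexity_supporting_line : nbhs p I ->
  exists c, forall x, I x -> f p + c * (x - p) <= f x.
Proof.
move=> /nbhs_ballP[e /= e0 Be].
have Ileft : I (p - e / 2).
  by apply: Be; rewrite /ball /= opprB addrC subrK ger0_norm; lra.
have Iright : I (p + e / 2).
  by apply: Be; rewrite /ball /= opprD addNKr normrN ger0_norm; lra.
pose L := [set s | exists2 a, I a /\ a < p & s = (f p - f a) / (p - a)].
have L_ub b : I b -> p < b -> ubound L ((f b - f p) / (b - p)).
  by move=> Ib pb _ [a [Ia ap] ->]; exact: point_of_convexity_slope_le.
have L0 : L !=set0.
  by exists ((f p - f (p - e / 2)) / (p - (p - e / 2))), (p - e / 2); split => //; lra.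
have hL : has_ubound L.
  by exists ((f (p + e / 2) - f p) / (p + e / 2 - p)); apply: L_ub => //; lra.
exists (sup L) => x Ix; have [xp|px|->] := ltgtP x p.
- have : (f p - f x) / (p - x) <= sup L by apply: ub_le_sup => //; exists x.
  rewrite ler_pdivrMr; last lra.
  nra.
- have : sup L <= (f x - f p) / (x - p) by apply: ge_sup => //; apply: L_ub.
  rewrite ler_pdivlMr; last lra.
  nra.
- by rewrite subrr mulr0 addr0.
Qed.

End point_of_convexity.

Section expectation_affine_minorant.
Context d (T : measurableType d) (R : realType) (P : probability T R).
Local Open Scope ereal_scope.

Let affine_funE (X : T -> R) (a c : R) :
  (fun w => a + c * X w)%R = (cst a \+ c \o* X)%R.
Proof. by apply/funext => w /=; rewrite mulrC. Qed.

Lemma Lfun1_affine (X : T -> R) (a c : R) : X \in Lfun P 1 ->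
  (fun w => a + c * X w)%R \in Lfun P 1.
Proof. by move=> LX; rewrite affine_funE rpredD ?Lfun_cst ?Lfun_scale. Qed.

Lemma expectation_affine (X : T -> R) (a c : R) : X \in Lfun P 1 ->
  'E_P[fun w => (a + c * X w)%R] = a%:E + c%:E * 'E_P[X].
Proof.
move=> LX; rewrite affine_funE expectationD ?Lfun_cst ?Lfun_scale //.
by rewrite expectationZl // expectation_cst.
Qed.

Lemma expectation_ge_supporting_line (X : T -> R) (g : R -> R) (p c : R) :
  X \in Lfun P 1 -> (g \o X) \in Lfun P 1 -> 'E_P[X] = p%:E ->
  (forall w, (g p + c * (X w - p) <= g (X w))%R) ->
  (g p)%:E <= 'E_P[g \o X].
Proof.
move=> LX LgX EX minor.
have <- : 'E_P[fun w => (g p - c * p + c * X w)%R] = (g p)%:E.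
  by rewrite expectation_affine // EX -EFinM -EFinD; congr (_%:E); ring.
rewrite unlock; apply: le_integral; rewrite -?Lfun1_integrable ?Lfun1_affine //.
by move=> w _ /=; rewrite lee_fin; have := minor w; lra.
Qed.

End expectation_affine_minorant.

Theorem theorem4 (R : realType) (I : set R) (f : R -> R)
  (d : measure_display) (T : measurableType d) (P : probability T R)
  (X : {RV P >-> R}) :
  open_interval I ->
  (forall x, I x -> {for x, continuous f}) ->
  (forall w, I (X w)) ->
  P.-integrable setT (EFin \o X) ->
  P.-integrable setT (EFin \o (f \o X)) ->
  point_of_convexity f I (fine 'E_P[X]) ->
  ((f (fine 'E_P[X]))%:E <= 'E_P[f \o X])%E.
Proof.
move=> [oI _] _ IX /Lfun1_integrable LX /Lfun1_integrable LfX convp.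
have EX : ('E_P[X] = (fine 'E_P[X])%:E)%E by rewrite fineK // expectation_fin_num.
have [c supp] := point_of_convexity_supporting_line convp (oI _ convp.1).
exact: expectation_ge_supporting_line LX LfX EX (fun w => supp _ (IX w)).
Qed.
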